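(* Let $L\ge 2$ and $N$ be integers with $2\le N\le L$, let $U>\frac{8}{L}$, and let $\phi\in\mathbb{R}$ with $0\le\phi<\frac{2\pi}{L}$. Consider the Lieb–Wu equations with one down-spin, i.e. the system \[ e^{\sqrt{-1}\,k_iL}=\frac{\lambda-\sin(k_i+\phi)-\sqrt{-1}\,U/4}{\lambda-\sin(k_i+\phi)+\sqrt{-1}\,U/4}\quad(i=1,\dots,N),\qquad \prod_{i=1}^{N}\frac{\lambda-\sin(k_i+\phi)-\sqrt{-1}\,U/4}{\lambda-\sin(k_i+\phi)+\sqrt{-1}\,U/4}=1, \] in the unknowns $k_1,\dots,k_N,\lambda$. Then these equations have $\binom{L}{N}(N-1)$ real solutions.
   Context: A real solution is a solution in which $\lambda\in\mathbb{R}$ and all $k_1,\dots,k_N$ are real numbers taken modulo $2\pi$ (in $[0,2\pi)$) that are pairwise distinct; solutions are counted as unordered sets $\{k_1,\dots,k_N\}$ together with $\lambda$. *)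

From Stdlib Require Import Reals List Sorted.
From Coquelicot Require Import Coquelicot.
Open Scope R_scope.

Definition cexpi (x : R) : C := (cos x, sin x).

Definition lw_factor (U phi lam k : R) : C :=
  Cdiv (lam - sin (k + phi), - (U / 4)) (lam - sin (k + phi), U / 4).

(* A real solution: the unordered set {k_1,...,k_N} of pairwise distinct reals
   in [0, 2 pi) is represented by the unique strictly increasing list
   enumerating it; together with lambda. *)
Definition LW_real_solution (L N : nat) (U phi : R) (s : list R * R) : Prop :=
  let (ks, lam) := s in
  length ks = N /\
  Sorted Rlt ks /\
  (forall k, In k ks -> 0 <= k < 2 * PI) /\
  (forall k, In k ks -> cexpi (k * INR L) = lw_factor U phi lam k) /\
  fold_right Cmult (RtoC 1) (map (lw_factor U phi lam) ks) = RtoC 1.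

(* Put c = U/4 and θ(λ,k) = 2 atan((λ - sin(k+φ))/c). Since (a - ic)/(a + ic) = e^{i(π + 2 atan(a/c))},
   the i-th equation says that the counting function z_λ(k) = kL - θ(λ,k) takes a value in π + 2πℤ.
   As |∂θ/∂k| <= 2/c = 8/U < L, z_λ is a strictly increasing bijection of ℝ, so for each λ the admissible
   momenta in [0, 2π) are exactly L points k_0(λ), ..., k_{L-1}(λ), where k_r(λ) is z_λ^{-1}(π + 2πr)
   reduced mod 2π. Choosing N of them, indexed by a set A of residues, turns the last equation into
   e^{i(Nπ + Θ_A(λ))} = 1 with Θ_A(λ) = Σ_{r ∈ A} θ(λ, k_r(λ)). Since z_λ decreases in λ, every k_r(λ)
   and hence Θ_A is continuous and strictly increasing, and Θ_A maps ℝ onto (-Nπ, Nπ); so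
   Θ_A(λ) = (2m - N)π has exactly one root for each m = 1, ..., N-1. *)

From Stdlib Require Import Reals List Sorted Permutation SetoidList Mergesort
  Orders ROrderedType Lia Lra ClassicalEpsilon ZArith.
From Coquelicot Require Import Coquelicot.
Open Scope R_scope.

Definition sum_map {A : Type} (f : A -> R) (l : list A) : R :=
  fold_right Rplus 0 (map f l).

Lemma sum_map_perm {A : Type} (f : A -> R) (l l' : list A) :
  Permutation l l' -> sum_map f l = sum_map f l'.
Proof. unfold sum_map; induction 1; simpl; lra. Qed.

Lemma sum_map_map {A B : Type} (f : B -> R) (g : A -> B) (l : list A) :
  sum_map f (map g l) = sum_map (fun a => f (g a)) l.
Proof. unfold sum_map; now rewrite map_map. Qed.

Lemma sum_map_add {A : Type} (f g : A -> R) (l : list A) :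
  sum_map (fun a => f a + g a) l = sum_map f l + sum_map g l.
Proof. unfold sum_map; induction l; simpl; lra. Qed.

Lemma sum_map_const {A : Type} (c : R) (l : list A) :
  sum_map (fun _ => c) l = INR (length l) * c.
Proof.
  unfold sum_map; induction l as [|a l IH]; cbn [map fold_right length].
  - simpl; ring.
  - rewrite IH, S_INR; ring.
Qed.

Lemma sum_map_le {A : Type} (f g : A -> R) (l : list A) :
  (forall a, In a l -> f a <= g a) -> sum_map f l <= sum_map g l.
Proof.
  unfold sum_map; induction l as [|a l IH]; simpl; intros H; [lra|].
  pose proof (H a (or_introl eq_refl)).
  pose proof (IH (fun b Hb => H b (or_intror Hb))). lra.
Qed.

Lemma sum_map_lt {A : Type} (f g : A -> R) (l : list A) : l <> nil ->
  (forall a, In a l -> f a < g a) -> sum_map f l < sum_map g l.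
Proof.
  destruct l as [|a l]; [congruence|]. intros _ H.
  pose proof (H a (or_introl eq_refl)).
  pose proof (sum_map_le f g l (fun b Hb => Rlt_le _ _ (H b (or_intror Hb)))).
  unfold sum_map in *; simpl; lra.
Qed.

Lemma continuity_sum_map {A : Type} (F : R -> A -> R) (l : list A) :
  (forall a, continuity (fun x => F x a)) -> continuity (fun x => sum_map (F x) l).
Proof.
  intros HF. unfold sum_map. induction l as [|a l IH]; simpl.
  - now apply continuity_const.
  - exact (continuity_plus _ _ (HF a) IH).
Qed.

Lemma lipschitz_continuity (f : R -> R) (M : R) :
  (forall x y, Rabs (f x - f y) <= M * Rabs (x - y)) -> continuity f.
Proof.
  intros H x0 eps Heps.
  assert (HM : 0 <= M).
  { specialize (H 1 0). pose proof (Rabs_pos (f 1 - f 0)).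
    rewrite Rminus_0_r, Rabs_R1 in H. lra. }
  exists (eps / (M + 1)). split; [apply Rdiv_lt_0_compat; lra|].
  intros x [_ Hx]. simpl in *. unfold R_dist in *.
  apply Rle_lt_trans with (M * (eps / (M + 1))).
  - eapply Rle_trans; [apply H|]. apply Rmult_le_compat_l; lra.
  - apply Rmult_lt_reg_r with (M + 1); [lra|].
    field_simplify; [|lra]. nra.
Qed.

Lemma atan_lipschitz x y : Rabs (atan x - atan y) <= Rabs (x - y).
Proof.
  destruct (MVT_abs atan (fun t => / (1 + t ^ 2)) y x) as [c [Hc _]].
  { intros; apply derivable_pt_lim_atan. }
  rewrite Hc.
  assert (H1 : 0 < / (1 + c ^ 2) <= 1).
  { pose proof (pow2_ge_0 c). split.
    - apply Rinv_0_lt_compat; lra.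
    - rewrite <- Rinv_1. apply Rinv_le_contravar; lra. }
  rewrite (Rabs_right (/ (1 + c ^ 2))) by lra.
  pose proof (Rabs_pos (x - y)). nra.
Qed.

Lemma sin_lipschitz x y : Rabs (sin x - sin y) <= Rabs (x - y).
Proof.
  destruct (MVT_abs sin cos y x) as [c [Hc _]].
  { intros; apply derivable_pt_lim_sin. }
  rewrite Hc.
  assert (Rabs (cos c) <= 1) by (apply Rabs_le, COS_bound).
  pose proof (Rabs_pos (x - y)). pose proof (Rabs_pos (cos c)). nra.
Qed.

Lemma sin_2PI_Z (j : Z) : sin (2 * PI * IZR j) = 0.
Proof. apply sin_eq_0_1. exists (2 * j)%Z. rewrite mult_IZR. ring. Qed.

Lemma cos_2PI_Z (j : Z) : cos (2 * PI * IZR j) = 1.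
Proof.
  replace (2 * PI * IZR j) with (2 * (IZR j * PI)) by ring.
  rewrite cos_2a_sin, sin_eq_0_1 by (now exists j). ring.
Qed.

Lemma sin_add_2PI_Z x (j : Z) : sin (x + 2 * PI * IZR j) = sin x.
Proof. rewrite sin_plus, sin_2PI_Z, cos_2PI_Z. ring. Qed.

Lemma cexpi_0 : cexpi 0 = RtoC 1.
Proof. unfold cexpi, RtoC. now rewrite cos_0, sin_0. Qed.

Lemma cexpi_add x y : Cmult (cexpi x) (cexpi y) = cexpi (x + y).
Proof. unfold cexpi, Cmult; simpl. rewrite cos_plus, sin_plus. f_equal; ring. Qed.

Lemma cexpi_add_2PI_Z x (j : Z) : cexpi (x + 2 * PI * IZR j) = cexpi x.
Proof. unfold cexpi. rewrite cos_plus, sin_plus, cos_2PI_Z, sin_2PI_Z. f_equal; ring. Qed.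

Lemma cexpi_eq_iff x y : cexpi x = cexpi y <-> exists j : Z, x = y + 2 * PI * IZR j.
Proof.
  split.
  - unfold cexpi; intros E. injection E as Hc Hs.
    assert (Hcos : cos (2 * ((x - y) / 2)) = 1).
    { replace (2 * ((x - y) / 2)) with (x - y) by field.
      rewrite cos_minus, Hc, Hs. pose proof (sin2_cos2 y). unfold Rsqr in *; lra. }
    rewrite cos_2a_sin in Hcos.
    assert (Hhalf : sin ((x - y) / 2) = 0) by (apply Rsqr_0_uniq; unfold Rsqr; lra).
    destruct (sin_eq_0_0 _ Hhalf) as [j Hj]. exists j. lra.
  - intros [j ->]. apply cexpi_add_2PI_Z.
Qed.

Lemma cexpi_eq_1_iff x : cexpi x = RtoC 1 <-> exists j : Z, x = 2 * PI * IZR j.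
Proof.
  rewrite <- cexpi_0, cexpi_eq_iff.
  split; intros [j Hj]; exists j; lra.
Qed.

Lemma prod_cexpi {A : Type} (f : A -> R) (l : list A) :
  fold_right Cmult (RtoC 1) (map (fun a => cexpi (f a)) l) = cexpi (sum_map f l).
Proof.
  unfold sum_map; induction l as [|a l IH]; simpl.
  - now rewrite cexpi_0.
  - now rewrite IH, cexpi_add.
Qed.

Definition angle_rep (x : R) : R := x - 2 * PI * IZR (Int_part (x / (2 * PI))).

Lemma angle_rep_range x : 0 <= angle_rep x < 2 * PI.
Proof.
  unfold angle_rep. pose proof PI_RGT_0.
  destruct (base_Int_part (x / (2 * PI))) as [H1 H2].
  assert (E : x = x / (2 * PI) * (2 * PI)) by (field; lra).
  split; nra.
Qed.

Lemma angle_rep_unique y (j : Z) : 0 <= y < 2 * PI -> angle_rep (y + 2 * PI * IZR j) = y.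
Proof.
  intros Hy. pose proof PI_RGT_0. unfold angle_rep.
  replace (Int_part ((y + 2 * PI * IZR j) / (2 * PI))) with j; [ring|].
  apply Int_part_spec.
  replace ((y + 2 * PI * IZR j) / (2 * PI)) with (y / (2 * PI) + IZR j) by (field; lra).
  assert (E : y = y / (2 * PI) * (2 * PI)) by (field; lra).
  assert (0 <= y / (2 * PI) < 1) by (split; nra).
  lra.
Qed.

Module RLeb := OTF_to_TTLB R_as_OT.
Module RSort := Sort RLeb.

Lemma Sorted_Rlt_sort (l : list R) : NoDup l -> Sorted Rlt (RSort.sort l).
Proof.
  intros Hl.
  assert (Hn : NoDup (RSort.sort l)) by exact (Permutation_NoDup (RSort.Permuted_sort l) Hl).
  pose proof (RSort.StronglySorted_sort l RLeb.leb_trans) as Hs.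
  revert Hn Hs. generalize (RSort.sort l) as s. intros s Hn Hs.
  apply StronglySorted_Sorted.
  induction Hs as [|a s Hs IH Ha]; constructor.
  - apply IH. now inversion Hn.
  - inversion Hn as [|? ? Hnotin _]; subst. rewrite Forall_forall in *. intros x Hx.
    destruct (proj1 (RLeb.leb_le a x) (Ha x Hx)) as [Hlt| ->]; [exact Hlt|contradiction].
Qed.

Lemma in_sort_iff (l : list R) x : In x (RSort.sort l) <-> In x l.
Proof. split; apply Permutation_in; [apply Permutation_sym|]; apply RSort.Permuted_sort. Qed.

Lemma Sorted_Rlt_NoDup (l : list R) : Sorted Rlt l -> NoDup l.
Proof.
  intros H. apply Sorted_StronglySorted in H; [|exact Rlt_trans].
  induction H as [|a l _ IH Ha]; constructor; auto.
  rewrite Forall_forall in Ha. intros Hin. exact (Rlt_irrefl a (Ha a Hin)).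
Qed.

Lemma Sorted_Rlt_eq (l1 l2 : list R) : Sorted Rlt l1 -> Sorted Rlt l2 ->
  (forall x, In x l1 <-> In x l2) -> l1 = l2.
Proof.
  intros H1 H2 H.
  assert (InA_eq : forall (x : R) l, InA eq x l <-> In x l).
  { intros x l. rewrite InA_alt. split; [intros [y [-> Hy]]; exact Hy | eauto]. }
  assert (E : eqlistA eq l1 l2).
  { apply (SortA_equivlistA_eqlistA eq_equivalence R_as_OT.lt_strorder R_as_OT.lt_compat H1 H2).
    intros x. rewrite !InA_eq. apply H. }
  clear -E. induction E; congruence.
Qed.

Fixpoint combinations {A : Type} (k : nat) (l : list A) : list (list A) :=
  match k, l with
  | O, _ => nil :: nil
  | S _, nil => nil
  | S k', x :: t => map (cons x) (combinations k' t) ++ combinations k t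
  end.

Section Combinations.
Context {A : Type}.

Lemma combinations_0 (l : list A) : combinations 0 l = nil :: nil.
Proof. now destruct l. Qed.

Lemma in_combinations_cons (k : nat) (x : A) (t : list A) (B : list A) :
  In B (combinations k (x :: t)) ->
  (exists k' B', B = x :: B' /\ In B' (combinations k' t)) \/
  (exists k', In B (combinations k' t)).
Proof.
  destruct k as [|k]; simpl.
  - intros [<-|[]]. right. exists 0%nat. rewrite combinations_0. now left.
  - intros HB. apply in_app_or in HB as [HB|HB].
    + apply in_map_iff in HB as [B' [<- HB']]. left. now exists k, B'.
    + right. now exists (S k).
Qed.

Lemma in_combinations (k : nat) (l B : list A) :
  In B (combinations k l) -> length B = k /\ incl B l.
Proof.
  revert k B. induction l as [|x t IH]; intros k B HB; destruct k as [|k]; simpl in HB.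
  - destruct HB as [<-|[]]. split; [reflexivity|intros a []].
  - contradiction.
  - destruct HB as [<-|[]]. split; [reflexivity|intros a []].
  - apply in_app_or in HB as [HB|HB].
    + apply in_map_iff in HB as [B' [<- HB']]. destruct (IH _ _ HB') as [H1 H2].
      split; [simpl; now f_equal|]. apply incl_cons; [now left|now apply incl_tl].
    + destruct (IH _ _ HB) as [H1 H2]. split; [exact H1|]. now apply incl_tl.
Qed.

Lemma combinations_nil (k : nat) (l : list A) : (length l < k)%nat -> combinations k l = nil.
Proof.
  revert k. induction l as [|x t IH]; intros k H; destruct k; simpl in *; try lia; auto.
  rewrite (IH k), (IH (S k)) by lia. reflexivity.
Qed.

Lemma length_combinations (k : nat) (l : list A) : (k <= length l)%nat ->
  INR (length (combinations k l)) = Binomial.C (length l) k.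
Proof.
  revert k. induction l as [|x t IH]; intros k Hk.
  - simpl in Hk. replace k with 0%nat by lia. simpl. now rewrite C_n_0.
  - destruct k as [|k]; [simpl; now rewrite C_n_0|].
    simpl length in *. cbn [combinations].
    rewrite length_app, length_map, plus_INR.
    destruct (Nat.eq_dec k (length t)) as [->|Hkt].
    + rewrite (combinations_nil (S (length t)) t), IH by lia. simpl length.
      rewrite !C_n_n. simpl. lra.
    + rewrite !IH by lia. apply pascal. lia.
Qed.

Lemma combinations_NoDup (k : nat) (l : list A) : NoDup l -> NoDup (combinations k l).
Proof.
  revert k. induction l as [|x t IH]; intros k Hl; destruct k as [|k]; simpl.
  - repeat constructor; auto.
  - constructor.
  - repeat constructor; auto.
  - inversion Hl as [|? ? Hx Ht]; subst. apply NoDup_app.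
    + apply FinFun.Injective_map_NoDup; [intros a b E; now injection E|auto].
    + auto.
    + intros B HB HB'. apply in_map_iff in HB as [B' [<- _]].
      apply Hx, (proj2 (in_combinations _ _ _ HB')). now left.
Qed.

Lemma in_combinations_NoDup (k : nat) (l B : list A) :
  NoDup l -> In B (combinations k l) -> NoDup B.
Proof.
  revert k B. induction l as [|x t IH]; intros k B Hl HB.
  - destruct k; simpl in HB; [destruct HB as [<-|[]]; constructor|contradiction].
  - inversion Hl as [|? ? Hx Ht]; subst.
    destruct (in_combinations_cons _ _ _ _ HB) as [[k' [B' [-> HB']]]|[k' HB']].
    + constructor; [|exact (IH _ _ Ht HB')].
      intros Hin. apply Hx, (proj2 (in_combinations _ _ _ HB')), Hin.
    + exact (IH _ _ Ht HB').
Qed.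

Lemma combinations_same_elements (k1 k2 : nat) (l B1 B2 : list A) : NoDup l ->
  In B1 (combinations k1 l) -> In B2 (combinations k2 l) ->
  (forall a, In a B1 <-> In a B2) -> B1 = B2.
Proof.
  revert k1 k2 B1 B2. induction l as [|x t IH]; intros k1 k2 B1 B2 Hl H1 H2 HB.
  - destruct k1, k2; simpl in H1, H2; try contradiction.
    destruct H1 as [<-|[]], H2 as [<-|[]]. reflexivity.
  - inversion Hl as [|? ? Hx Ht]; subst.
    assert (Hnot : forall k B, In B (combinations k t) -> ~ In x B).
    { intros k B HB' Hin. apply Hx, (proj2 (in_combinations _ _ _ HB')), Hin. }
    destruct (in_combinations_cons _ _ _ _ H1) as [[k1' [B1' [-> H1']]]|[k1' H1']],
      (in_combinations_cons _ _ _ _ H2) as [[k2' [B2' [-> H2']]]|[k2' H2']].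
    + f_equal. apply (IH k1' k2'); auto. intros a. split; intros Ha.
      * destruct (proj1 (HB a) (or_intror Ha)) as [<-|Ha']; [|exact Ha'].
        exfalso. exact (Hnot _ _ H1' Ha).
      * destruct (proj2 (HB a) (or_intror Ha)) as [<-|Ha']; [|exact Ha'].
        exfalso. exact (Hnot _ _ H2' Ha).
    + exfalso. apply (Hnot _ _ H2'), HB. now left.
    + exfalso. apply (Hnot _ _ H1'), HB. now left.
    + exact (IH _ _ _ _ Ht H1' H2' HB).
Qed.

Lemma combinations_complete (l B : list A) : NoDup l -> NoDup B -> incl B l ->
  exists B', In B' (combinations (length B) l) /\ Permutation B' B.
Proof.
  revert B. induction l as [|x t IH]; intros B Hl HB Hi.
  - destruct B as [|b B]; [|exfalso; apply (Hi b); now left].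
    exists nil. simpl; auto.
  - inversion Hl as [|? ? Hx Ht]; subst.
    destruct (classic (In x B)) as [HxB|HxB].
    + destruct (in_split _ _ HxB) as [B1 [B2 ->]].
      destruct (NoDup_remove _ _ _ HB) as [HB' Hx'].
      destruct (IH (B1 ++ B2)) as [B' [HB'' HP]]; auto.
      { intros a Ha. destruct (Hi a) as [<-|Hat]; auto.
        - apply in_app_or in Ha. apply in_or_app. destruct Ha; [left|right; right]; auto.
        - contradiction. }
      exists (x :: B'). split.
      * rewrite length_app in *. simpl length. rewrite Nat.add_succ_r. simpl.
        apply in_or_app. left. now apply in_map.
      * eapply perm_trans; [apply perm_skip, HP|]. apply Permutation_middle.
    + destruct (IH B) as [B' [HB' HP]]; auto.
      { intros a Ha. destruct (Hi a Ha) as [<-|Hat]; [contradiction|exact Hat]. }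
      exists B'. split; [|exact HP]. destruct (length B) as [|k].
      * rewrite combinations_0 in *. exact HB'.
      * simpl. apply in_or_app. now right.
Qed.

End Combinations.

Lemma list_lift {A B : Type} (f : A -> B) (P : A -> Prop) (l : list B) :
  (forall y, In y l -> exists x, P x /\ y = f x) ->
  exists l', map f l' = l /\ forall x, In x l' -> P x.
Proof.
  induction l as [|y l IH]; intros H.
  - exists nil. split; [reflexivity|intros x []].
  - destruct (H y (or_introl eq_refl)) as [x [Hx ->]].
    destruct IH as [l' [<- Hl']]; [intros z Hz; apply H; now right|].
    exists (x :: l'). split; [reflexivity|]. intros z [<-|Hz]; auto.
Qed.

Lemma NoDup_list_prod {A B : Type} (l1 : list A) (l2 : list B) :
  NoDup l1 -> NoDup l2 -> NoDup (list_prod l1 l2).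
Proof.
  induction l1 as [|a l1 IH]; intros H1 H2; simpl; [constructor|].
  inversion H1 as [|? ? Ha Hl1]; subst. apply NoDup_app; auto.
  - apply FinFun.Injective_map_NoDup; auto. intros x y E; now injection E.
  - intros p Hp Hq. apply in_map_iff in Hp as [b [<- _]].
    apply in_prod_iff in Hq as [Ha' _]. contradiction.
Qed.

Section Phase.
Variables U phi : R.
Hypothesis U_pos : 0 < U.

Definition phase (lam k : R) : R := 2 * atan ((lam - sin (k + phi)) / (U / 4)).

(* With a := lam - sin (k + phi) and c := U/4 > 0:
   (a - i c)/(a + i c) = (a - i c)^2/(a^2 + c^2) = -(c + i a)^2/(a^2 + c^2) = -e^{2 i atan(a/c)}. *)
Lemma lw_factor_phase lam k : lw_factor U phi lam k = cexpi (PI + phase lam k).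
Proof.
  unfold lw_factor, phase, cexpi, Cdiv, Cmult, Cinv. simpl.
  set (a := lam - sin (k + phi)). set (c := U / 4).
  assert (Hc : 0 < c) by (unfold c; lra).
  rewrite (Rplus_comm PI), neg_cos, neg_sin, cos_2a, sin_2a, cos_atan, sin_atan.
  set (z := a / c). set (s := sqrt (1 + z²)).
  assert (Hz : 0 < 1 + z²) by (pose proof (Rle_0_sqr z); lra).
  assert (Hs : s * s = 1 + z²) by (unfold s; apply sqrt_sqrt; lra).
  assert (Hs0 : s <> 0) by (intro E; rewrite E in Hs; lra).
  assert (HD : a ^ 2 + c ^ 2 <> 0) by (pose proof (pow2_ge_0 a); nra).
  f_equal.
  - replace (1 / s * (1 / s) - z / s * (z / s)) with ((1 - z * z) / (s * s)) by (field; auto).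
    rewrite Hs. unfold z, Rsqr. field. split; lra.
  - replace (2 * (z / s) * (1 / s)) with ((2 * z) / (s * s)) by (field; auto).
    rewrite Hs. unfold z, Rsqr. field. split; lra.
Qed.

Lemma phase_bounds lam k : - PI < phase lam k < PI.
Proof. unfold phase. pose proof (atan_bound ((lam - sin (k + phi)) / (U / 4))). lra. Qed.

Lemma phase_atan_bounds lam k :
  2 * atan ((lam - 1) / (U / 4)) <= phase lam k <= 2 * atan ((lam + 1) / (U / 4)).
Proof.
  unfold phase. pose proof (SIN_bound (k + phi)).
  assert (Hc : 0 < / (U / 4)) by (apply Rinv_0_lt_compat; lra).
  assert (Hmono : forall x y, x <= y -> 2 * atan (x / (U / 4)) <= 2 * atan (y / (U / 4))).
  { intros x y [Hxy| ->]; [|lra]. apply Rmult_le_compat_l; [lra|]. left.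
    apply atan_increasing. unfold Rdiv. apply Rmult_lt_compat_r; assumption. }
  split; apply Hmono; lra.
Qed.

Lemma phase_add_2PI_Z lam k (j : Z) : phase lam (k + 2 * PI * IZR j) = phase lam k.
Proof.
  unfold phase. replace (k + 2 * PI * IZR j + phi) with (k + phi + 2 * PI * IZR j) by ring.
  now rewrite sin_add_2PI_Z.
Qed.

Lemma phase_increasing l1 l2 k : l1 < l2 -> phase l1 k < phase l2 k.
Proof.
  intros Hl. unfold phase. apply Rmult_lt_compat_l; [lra|]. apply atan_increasing.
  unfold Rdiv. apply Rmult_lt_compat_r; [apply Rinv_0_lt_compat|]; lra.
Qed.

Lemma phase_lipschitz l1 k1 l2 k2 :
  Rabs (phase l1 k1 - phase l2 k2) <= 8 / U * (Rabs (l1 - l2) + Rabs (k1 - k2)).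
Proof.
  unfold phase.
  set (s1 := sin (k1 + phi)). set (s2 := sin (k2 + phi)).
  assert (Hs : Rabs (s1 - s2) <= Rabs (k1 - k2)).
  { replace (k1 - k2) with (k1 + phi - (k2 + phi)) by ring. apply sin_lipschitz. }
  assert (Ht : Rabs ((l1 - l2) - (s1 - s2)) <= Rabs (l1 - l2) + Rabs (k1 - k2)).
  { unfold Rminus at 1. eapply Rle_trans; [apply Rabs_triang|]. rewrite Rabs_Ropp. lra. }
  pose proof (atan_lipschitz ((l1 - s1) / (U / 4)) ((l2 - s2) / (U / 4))) as Ha.
  replace ((l1 - s1) / (U / 4) - (l2 - s2) / (U / 4)) with (((l1 - l2) - (s1 - s2)) * (4 / U))
    in Ha by (field; lra).
  rewrite Rabs_mult, (Rabs_right (4 / U)) in Ha by (apply Rle_ge, Rlt_le, Rdiv_lt_0_compat; lra).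
  replace (2 * atan ((l1 - s1) / (U / 4)) - 2 * atan ((l2 - s2) / (U / 4)))
    with (2 * (atan ((l1 - s1) / (U / 4)) - atan ((l2 - s2) / (U / 4)))) by ring.
  rewrite Rabs_mult, (Rabs_right 2) by lra.
  assert (H4 : 0 < 4 / U) by (apply Rdiv_lt_0_compat; lra).
  replace (8 / U) with (2 * (4 / U)) by (field; lra).
  pose proof (Rmult_le_compat_r _ _ _ (Rlt_le _ _ H4) Ht). nra.
Qed.

End Phase.

Definition target (n m : nat) : R := (2 * INR m - INR n) * PI.

Section CountingFunction.
Variables (L : nat) (U phi : R).
Hypothesis U_pos : 0 < U.
Hypothesis L_large : 8 / U < INR L.

Let L_pos : 0 < INR L.
Proof. assert (0 < 8 / U) by (apply Rdiv_lt_0_compat; lra). lra. Qed.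

Definition counting (lam k : R) : R := k * INR L - phase U phi lam k.

Lemma counting_lt lam k1 k2 : k1 < k2 -> counting lam k1 < counting lam k2.
Proof.
  intros Hk. unfold counting.
  pose proof (phase_lipschitz U phi U_pos lam k2 lam k1) as H.
  rewrite Rminus_diag, Rabs_R0, Rplus_0_l, (Rabs_right (k2 - k1)) in H by lra.
  pose proof (Rle_abs (phase U phi lam k2 - phase U phi lam k1)).
  assert (8 / U * (k2 - k1) < INR L * (k2 - k1)) by (apply Rmult_lt_compat_r; lra).
  lra.
Qed.

Lemma counting_le_reflect lam k1 k2 : counting lam k1 <= counting lam k2 -> k1 <= k2.
Proof.
  intros H. destruct (Rle_lt_dec k1 k2) as [Hk|Hk]; [exact Hk|].
  pose proof (counting_lt lam _ _ Hk). lra.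
Qed.

Lemma counting_add_2PI_Z lam k (j : Z) :
  counting lam (k + 2 * PI * IZR j) = counting lam k + 2 * PI * IZR j * INR L.
Proof. unfold counting. rewrite phase_add_2PI_Z. ring. Qed.

Lemma counting_continuous lam : continuity (counting lam).
Proof.
  apply (lipschitz_continuity _ (INR L + 8 / U)). intros x y. unfold counting.
  pose proof (phase_lipschitz U phi U_pos lam x lam y) as H.
  rewrite Rminus_diag, Rabs_R0, Rplus_0_l in H.
  replace (x * INR L - phase U phi lam x - (y * INR L - phase U phi lam y))
    with ((x - y) * INR L + - (phase U phi lam x - phase U phi lam y)) by ring.
  eapply Rle_trans; [apply Rabs_triang|].
  rewrite Rabs_Ropp, Rabs_mult, (Rabs_right (INR L)) by lra. lra.
Qed.

(* The phase lies in (-PI, PI), so [counting] changes sign on [(v - PI)/L, (v + PI)/L]. *)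
Lemma counting_surjective lam v : exists k, counting lam k = v.
Proof.
  set (f := fun k => counting lam k - v).
  assert (Hf : continuity f).
  { apply continuity_minus; [apply counting_continuous|apply continuity_const; now intros ? ?]. }
  pose proof PI_RGT_0.
  assert (Hlo : f ((v - PI) / INR L) < 0).
  { unfold f, counting. pose proof (phase_bounds U phi lam ((v - PI) / INR L)).
    replace ((v - PI) / INR L * INR L) with (v - PI) by (field; lra). lra. }
  assert (Hhi : 0 < f ((v + PI) / INR L)).
  { unfold f, counting. pose proof (phase_bounds U phi lam ((v + PI) / INR L)).
    replace ((v + PI) / INR L * INR L) with (v + PI) by (field; lra). lra. }
  assert (Hord : (v - PI) / INR L < (v + PI) / INR L).
  { unfold Rdiv. apply Rmult_lt_compat_r; [apply Rinv_0_lt_compat|]; lra. }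
  destruct (IVT f _ _ Hf Hord Hlo Hhi) as [k [_ Hk]].
  exists k. unfold f in Hk. lra.
Qed.

Definition counting_root (lam : R) (I : Z) : R :=
  epsilon (inhabits 0) (fun k => counting lam k = PI + 2 * PI * IZR I).

Lemma counting_root_spec lam I : counting lam (counting_root lam I) = PI + 2 * PI * IZR I.
Proof. unfold counting_root. apply epsilon_spec, counting_surjective. Qed.

Lemma counting_root_unique lam I k :
  counting lam k = PI + 2 * PI * IZR I -> k = counting_root lam I.
Proof.
  intros H. apply Rle_antisym; apply (counting_le_reflect lam);
    rewrite H, counting_root_spec; lra.
Qed.

Lemma counting_root_inj lam I1 I2 : counting_root lam I1 = counting_root lam I2 -> I1 = I2.
Proof.
  intros E. pose proof (counting_root_spec lam I1) as E1.
  rewrite E, counting_root_spec in E1. pose proof PI_RGT_0.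
  apply eq_IZR. nra.
Qed.

Lemma counting_root_shift lam I (j : Z) :
  counting_root lam (I + Z.of_nat L * j) = counting_root lam I + 2 * PI * IZR j.
Proof.
  symmetry. apply counting_root_unique.
  rewrite counting_add_2PI_Z, counting_root_spec, plus_IZR, mult_IZR, <- INR_IZR_INZ. ring.
Qed.

Lemma phase_counting_root lam I :
  phase U phi lam (counting_root lam I) = counting_root lam I * INR L - PI - 2 * PI * IZR I.
Proof. pose proof (counting_root_spec lam I) as E. unfold counting in E. lra. Qed.

(* [counting] decreases in [lam] and increases in [k], so its level sets move right as [lam] grows. *)
Lemma counting_root_increasing l1 l2 I : l1 < l2 -> counting_root l1 I < counting_root l2 I.
Proof.
  intros Hl. destruct (Rlt_le_dec (counting_root l1 I) (counting_root l2 I)) as [H|H]; [exact H|].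
  exfalso.
  assert (Hlt : counting l2 (counting_root l1 I) < counting l1 (counting_root l1 I)).
  { unfold counting. pose proof (phase_increasing U phi U_pos l1 l2 (counting_root l1 I) Hl).
    lra. }
  assert (Hle : counting l2 (counting_root l2 I) <= counting l2 (counting_root l1 I)).
  { destruct H as [H|H]; [left; now apply counting_lt|rewrite H; lra]. }
  rewrite !counting_root_spec in *. lra.
Qed.

Lemma counting_root_lipschitz l1 l2 I :
  Rabs (counting_root l1 I - counting_root l2 I) * (INR L - 8 / U) <= 8 / U * Rabs (l1 - l2).
Proof.
  set (K1 := counting_root l1 I). set (K2 := counting_root l2 I).
  assert (E : (K1 - K2) * INR L = phase U phi l1 K1 - phase U phi l2 K2).
  { pose proof (phase_counting_root l1 I) as E1. pose proof (phase_counting_root l2 I) as E2.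
    fold K1 in E1. fold K2 in E2. lra. }
  pose proof (phase_lipschitz U phi U_pos l1 K1 l2 K2) as H.
  rewrite <- E, Rabs_mult, (Rabs_right (INR L)) in H by lra. lra.
Qed.

Lemma counting_root_continuous I : continuity (fun lam => counting_root lam I).
Proof.
  apply (lipschitz_continuity _ (8 / U / (INR L - 8 / U))). intros l1 l2.
  pose proof (counting_root_lipschitz l1 l2 I) as H.
  set (d := INR L - 8 / U) in *. assert (Hd : 0 < d) by (unfold d; lra).
  apply Rmult_le_reg_r with d; [exact Hd|].
  replace (8 / U / d * Rabs (l1 - l2) * d) with (8 / U * Rabs (l1 - l2)) by (field; lra).
  exact H.
Qed.

Lemma lw_momentum_iff lam k :
  cexpi (k * INR L) = lw_factor U phi lam k <-> exists I : Z, k = counting_root lam I.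
Proof.
  rewrite lw_factor_phase, cexpi_eq_iff by exact U_pos. split.
  - intros [I HI]. exists I. apply counting_root_unique. unfold counting. lra.
  - intros [I ->]. exists I. pose proof (counting_root_spec lam I). unfold counting in *. lra.
Qed.

Definition momentum (lam : R) (r : nat) : R := angle_rep (counting_root lam (Z.of_nat r)).

Lemma momentum_range lam r : 0 <= momentum lam r < 2 * PI.
Proof. apply angle_rep_range. Qed.

Lemma momentum_counting_root lam r :
  exists j : Z, momentum lam r = counting_root lam (Z.of_nat r + Z.of_nat L * j).
Proof.
  exists (- Int_part (counting_root lam (Z.of_nat r) / (2 * PI)))%Z.
  rewrite counting_root_shift, opp_IZR. unfold momentum, angle_rep. ring.
Qed.

Lemma momentum_solves lam r :
  cexpi (momentum lam r * INR L) = lw_factor U phi lam (momentum lam r).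
Proof.
  apply lw_momentum_iff. destruct (momentum_counting_root lam r) as [j Hj]. now exists (Z.of_nat r + Z.of_nat L * j)%Z.
Qed.

Lemma momentum_inj lam r1 r2 : (r1 < L)%nat -> (r2 < L)%nat ->
  momentum lam r1 = momentum lam r2 -> r1 = r2.
Proof.
  intros H1 H2 E.
  destruct (momentum_counting_root lam r1) as [j1 E1], (momentum_counting_root lam r2) as [j2 E2].
  rewrite E1, E2 in E. apply counting_root_inj in E.
  assert (Hd : (Z.of_nat L * (j1 - j2) = Z.of_nat r2 - Z.of_nat r1)%Z) by lia.
  destruct (Z.lt_trichotomy (j1 - j2) 0) as [Hj|[Hj|Hj]]; [nia| |nia].
  rewrite Hj in Hd. lia.
Qed.

Lemma momentum_complete lam k : 0 <= k < 2 * PI ->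
  cexpi (k * INR L) = lw_factor U phi lam k -> exists r, (r < L)%nat /\ k = momentum lam r.
Proof.
  intros Hk E. apply lw_momentum_iff in E as [I ->].
  assert (HL : (0 < Z.of_nat L)%Z) by (destruct L; [simpl in L_pos; lra|lia]).
  pose proof (Z.mod_pos_bound I (Z.of_nat L) HL) as Hr.
  exists (Z.to_nat (I mod Z.of_nat L)). split; [lia|].
  unfold momentum. rewrite Z2Nat.id by lia.
  assert (EI : counting_root lam I
               = counting_root lam (I mod Z.of_nat L) + 2 * PI * IZR (I / Z.of_nat L)).
  { rewrite <- counting_root_shift. f_equal. pose proof (Z.div_mod I (Z.of_nat L)). lia. }
  replace (counting_root lam (I mod Z.of_nat L))
    with (counting_root lam I + 2 * PI * IZR (- (I / Z.of_nat L))) by (rewrite opp_IZR; lra).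
  now rewrite angle_rep_unique.
Qed.


Lemma phase_momentum lam r :
  phase U phi lam (momentum lam r) = counting_root lam (Z.of_nat r) * INR L - PI - 2 * PI * INR r.
Proof.
  destruct (momentum_counting_root lam r) as [j ->].
  now rewrite counting_root_shift, phase_add_2PI_Z, phase_counting_root, <- INR_IZR_INZ.
Qed.

Definition total_phase (A : list nat) (lam : R) : R :=
  sum_map (fun r => phase U phi lam (momentum lam r)) A.

Lemma total_phase_continuous A : continuity (total_phase A).
Proof.
  apply continuity_sum_map. intros r lam.
  apply (continuity_pt_ext (fun l => counting_root l (Z.of_nat r) * INR L - (PI + 2 * PI * INR r))).
  { intros l. rewrite phase_momentum. ring. }
  apply (continuity_minus (fun l => counting_root l (Z.of_nat r) * INR L) (fun _ => PI + 2 * PI * INR r)).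
  - apply (continuity_mult (fun l => counting_root l (Z.of_nat r)) (fun _ => INR L)).
    + apply counting_root_continuous.
    + now apply continuity_const.
  - now apply continuity_const.
Qed.

Lemma total_phase_increasing A l1 l2 : A <> nil -> l1 < l2 ->
  total_phase A l1 < total_phase A l2.
Proof.
  intros HA Hl. apply sum_map_lt; [exact HA|]. intros r _. rewrite !phase_momentum.
  pose proof (counting_root_increasing l1 l2 (Z.of_nat r) Hl).
  pose proof (Rmult_lt_compat_r (INR L) _ _ L_pos H). lra.
Qed.

Lemma total_phase_inj A l1 l2 : A <> nil -> total_phase A l1 = total_phase A l2 -> l1 = l2.
Proof.
  intros HA E. destruct (Rtotal_order l1 l2) as [H|[H|H]]; [|exact H|];
    pose proof (total_phase_increasing A _ _ HA H); lra.
Qed.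

Lemma total_phase_bounds A lam : A <> nil ->
  - INR (length A) * PI < total_phase A lam < INR (length A) * PI.
Proof.
  intros HA.
  pose proof (sum_map_lt (fun _ => - PI) _ A HA
                (fun r _ => proj1 (phase_bounds U phi lam (momentum lam r)))).
  pose proof (sum_map_lt _ (fun _ => PI) A HA
                (fun r _ => proj2 (phase_bounds U phi lam (momentum lam r)))).
  rewrite !sum_map_const in *. unfold total_phase. lra.
Qed.

Lemma total_phase_atan_bounds A lam :
  INR (length A) * (2 * atan ((lam - 1) / (U / 4))) <= total_phase A lam
  <= INR (length A) * (2 * atan ((lam + 1) / (U / 4))).
Proof.
  rewrite <- !sum_map_const. split; apply sum_map_le; intros r _;
    apply (phase_atan_bounds U phi U_pos).
Qed.

Lemma total_phase_surjective A y : A <> nil ->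
  - INR (length A) * PI < y < INR (length A) * PI -> exists lam, total_phase A lam = y.
Proof.
  intros HA [Hlo Hhi]. set (n := INR (length A)) in *.
  assert (Hn : 0 < n).
  { unfold n. destruct A as [|a A]; [congruence|]. simpl length. rewrite S_INR.
    pose proof (pos_INR (length A)). lra. }
  pose proof PI_RGT_0.
  set (w := y / (2 * n)).
  assert (Hy : y = 2 * n * w) by (unfold w; field; lra).
  assert (Hw : - (PI / 2) < w < PI / 2) by (rewrite Hy in Hlo, Hhi; split; nra).
  set (w1 := (w - PI / 2) / 2). set (w2 := (w + PI / 2) / 2).
  set (lam1 := -1 + U / 4 * tan w1). set (lam2 := 1 + U / 4 * tan w2).
  assert (H1 : total_phase A lam1 < y).
  { eapply Rle_lt_trans; [apply (proj2 (total_phase_atan_bounds A lam1))|]. fold n.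
    replace ((lam1 + 1) / (U / 4)) with (tan w1) by (unfold lam1; field; lra).
    rewrite atan_tan by (unfold w1; lra). unfold w1. nra. }
  assert (H2 : y < total_phase A lam2).
  { eapply Rlt_le_trans; [|apply (proj1 (total_phase_atan_bounds A lam2))]. fold n.
    replace ((lam2 - 1) / (U / 4)) with (tan w2) by (unfold lam2; field; lra).
    rewrite atan_tan by (unfold w2; lra). unfold w2. nra. }
  assert (H12 : lam1 < lam2).
  { destruct (Rlt_le_dec lam1 lam2) as [Hlt|[Hgt|Heq]]; [exact Hlt| |rewrite Heq in H2; lra].
    pose proof (total_phase_increasing A _ _ HA Hgt). lra. }
  set (f := fun lam => total_phase A lam - y).
  assert (Hf : continuity f).
  { apply (continuity_minus (total_phase A) (fun _ => y)).
    - apply total_phase_continuous.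
    - now apply continuity_const. }
  destruct (IVT f lam1 lam2 Hf H12) as [lam [_ Hlam]]; unfold f; [lra|lra|].
  exists lam. unfold f in Hlam. lra.
Qed.

Definition rapidity (A : list nat) (y : R) : R :=
  epsilon (inhabits 0) (fun lam => total_phase A lam = y).

Lemma rapidity_spec A y : A <> nil -> - INR (length A) * PI < y < INR (length A) * PI ->
  total_phase A (rapidity A y) = y.
Proof. intros HA Hy. unfold rapidity. apply epsilon_spec. now apply total_phase_surjective. Qed.

Lemma rapidity_unique A lam : A <> nil -> lam = rapidity A (total_phase A lam).
Proof.
  intros HA. apply (total_phase_inj A); [exact HA|].
  rewrite rapidity_spec; [reflexivity|exact HA|]. now apply total_phase_bounds.
Qed.

Lemma prod_lw_factor_momenta lam A ks : Permutation ks (map (momentum lam) A) ->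
  fold_right Cmult (RtoC 1) (map (lw_factor U phi lam) ks)
  = cexpi (INR (length A) * PI + total_phase A lam).
Proof.
  intros HP.
  rewrite (map_ext _ _ (lw_factor_phase U phi U_pos lam)), prod_cexpi, (sum_map_perm _ _ _ HP).
  rewrite sum_map_map, sum_map_add, sum_map_const. reflexivity.
Qed.


Lemma in_map_momentum lam A r : (r < L)%nat -> (forall r', In r' A -> (r' < L)%nat) ->
  In (momentum lam r) (map (momentum lam) A) <-> In r A.
Proof.
  intros Hr HA. split; [|apply in_map].
  intros (r' & E & Hr')%in_map_iff. apply momentum_inj in E; [now subst|auto|exact Hr].
Qed.

Lemma cexpi_total_phase_eq_1 A lam : A <> nil ->
  cexpi (INR (length A) * PI + total_phase A lam) = RtoC 1 <->
  exists m, (0 < m < length A)%nat /\ total_phase A lam = target (length A) m.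
Proof.
  intros HA. rewrite cexpi_eq_1_iff. unfold target.
  pose proof (total_phase_bounds A lam HA). pose proof PI_RGT_0.
  split.
  - intros [j Hj].
    assert (Hj0 : (0 < j)%Z) by (apply lt_IZR; nra).
    assert (Hjn : (j < Z.of_nat (length A))%Z) by (apply lt_IZR; rewrite <- INR_IZR_INZ; nra).
    exists (Z.to_nat j). split; [lia|]. rewrite INR_IZR_INZ, Z2Nat.id by lia. lra.
  - intros [m [_ Hm]]. exists (Z.of_nat m). rewrite <- INR_IZR_INZ. lra.
Qed.

End CountingFunction.

Section Solutions.
Variables (L N : nat) (U phi : R).
Hypothesis U_pos : 0 < U.
Hypothesis L_large : 8 / U < INR L.
Hypothesis N_pos : (1 <= N)%nat.
Hypothesis N_le_L : (N <= L)%nat.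

Definition labels : list (list nat * nat) :=
  list_prod (combinations N (seq 0 L)) (seq 1 (N - 1)).

Definition lw_solution (p : list nat * nat) : list R * R :=
  let lam := rapidity L U phi (fst p) (target N (snd p)) in
  (RSort.sort (map (momentum L U phi lam) (fst p)), lam).

Lemma labels_NoDup : NoDup labels.
Proof. apply NoDup_list_prod; [apply combinations_NoDup|]; apply seq_NoDup. Qed.

Lemma length_labels : INR (length labels) = Binomial.C L N * INR (N - 1).
Proof.
  unfold labels. rewrite length_prod, mult_INR, length_combinations, !length_seq;
    rewrite ?length_seq; auto.
Qed.

Lemma in_combinations_range A :
  In A (combinations N (seq 0 L)) ->
  length A = N /\ A <> nil /\ NoDup A /\ forall r, In r A -> (r < L)%nat.
Proof.
  intros HA. destruct (in_combinations _ _ _ HA) as [Hlen Hincl].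
  split; [exact Hlen|split; [|split]].
  - intros ->. simpl in Hlen. lia.
  - exact (in_combinations_NoDup _ _ _ (seq_NoDup _ _) HA).
  - intros r Hr. apply Hincl, in_seq in Hr. lia.
Qed.

Lemma total_phase_rapidity A m : In (A, m) labels ->
  total_phase L U phi A (rapidity L U phi A (target N m)) = target N m.
Proof.
  intros (HA & Hm)%in_prod_iff. apply in_seq in Hm.
  destruct (in_combinations_range A HA) as (Hlen & Hnil & _ & _).
  apply rapidity_spec; auto. rewrite Hlen. unfold target. pose proof PI_RGT_0.
  assert (1 <= INR m) by (apply (le_INR 1); lia).
  assert (INR m + 1 <= INR N) by (rewrite <- S_INR; apply le_INR; lia).
  split; nra.
Qed.

Lemma lw_solution_correct p : In p labels -> LW_real_solution L N U phi (lw_solution p).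
Proof.
  destruct p as [A m]. intros Hp.
  pose proof (total_phase_rapidity A m Hp) as Htp.
  apply in_prod_iff in Hp as [HA Hm]. apply in_seq in Hm.
  destruct (in_combinations_range A HA) as (Hlen & Hnil & HnA & HAL).
  unfold lw_solution, LW_real_solution; simpl.
  set (lam := rapidity L U phi A (target N m)) in *.
  pose proof (RSort.Permuted_sort (map (momentum L U phi lam) A)) as HP.
  assert (Hks : forall k, In k (RSort.sort (map (momentum L U phi lam) A)) ->
                  exists r, k = momentum L U phi lam r).
  { intros k (r & <- & _)%in_sort_iff%in_map_iff. now exists r. }
  split; [|split; [|split; [|split]]].
  - now rewrite <- (Permutation_length HP), length_map.
  - apply Sorted_Rlt_sort, FinFun.Injective_map_NoDup_in; [|exact HnA].
    intros r1 r2 H1 H2. apply momentum_inj; auto.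
  - intros k [r ->]%Hks. apply momentum_range.
  - intros k [r ->]%Hks. now apply momentum_solves.
  - rewrite (prod_lw_factor_momenta L U phi U_pos lam A _ (Permutation_sym HP)).
    apply cexpi_total_phase_eq_1; [exact Hnil|]. exists m. rewrite Hlen. split; [lia|exact Htp].
Qed.

Lemma lw_solution_momenta ks lam : LW_real_solution L N U phi (ks, lam) ->
  exists A, In A (combinations N (seq 0 L)) /\ Permutation ks (map (momentum L U phi lam) A).
Proof.
  intros (Hlen & Hsort & Hrange & Heq & _).
  destruct (list_lift (momentum L U phi lam) (fun r => (r < L)%nat) ks) as [B [<- HBL]].
  { intros k Hk. apply momentum_complete; auto. }
  assert (HnB : NoDup B) by exact (NoDup_map_inv _ _ (Sorted_Rlt_NoDup _ Hsort)).
  destruct (combinations_complete (seq 0 L) B (seq_NoDup _ _) HnB) as [A [HA HAB]].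
  { intros r Hr. apply in_seq. specialize (HBL r Hr). lia. }
  rewrite length_map in Hlen. rewrite Hlen in HA.
  exists A. split; [exact HA|]. apply Permutation_map, Permutation_sym, HAB.
Qed.

Lemma lw_solution_complete s : LW_real_solution L N U phi s ->
  exists p, lw_solution p = s /\ In p labels.
Proof.
  destruct s as [ks lam]. intros Hs.
  destruct (lw_solution_momenta ks lam Hs) as [A [HA HP]].
  destruct (in_combinations_range A HA) as (Hlen & Hnil & HnA & HAL).
  destruct Hs as (_ & Hsort & _ & _ & Hprod).
  rewrite (prod_lw_factor_momenta L U phi U_pos lam A ks HP) in Hprod.
  apply cexpi_total_phase_eq_1 in Hprod as [m [Hm Htp]]; [|exact Hnil].
  rewrite Hlen in Hm, Htp.
  exists (A, m). split.
  - unfold lw_solution; simpl. rewrite <- Htp, <- (rapidity_unique L U phi U_pos L_large A lam Hnil).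
    f_equal. apply Sorted_Rlt_eq; [|exact Hsort|].
    + apply Sorted_Rlt_sort. apply (Permutation_NoDup HP), (Sorted_Rlt_NoDup _ Hsort).
    + intros k. rewrite in_sort_iff.
      split; apply Permutation_in; [apply Permutation_sym|]; exact HP.
  - apply in_prod; [exact HA|]. apply in_seq. lia.
Qed.

Lemma lw_solution_inj p1 p2 : In p1 labels -> In p2 labels ->
  lw_solution p1 = lw_solution p2 -> p1 = p2.
Proof.
  destruct p1 as [A1 m1], p2 as [A2 m2]. intros H1 H2 E.
  pose proof (total_phase_rapidity A1 m1 H1) as Htp1.
  pose proof (total_phase_rapidity A2 m2 H2) as Htp2.
  apply in_prod_iff in H1 as [HA1 _], H2 as [HA2 _].
  destruct (in_combinations_range A1 HA1) as (_ & _ & _ & HL1).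
  destruct (in_combinations_range A2 HA2) as (_ & _ & _ & HL2).
  unfold lw_solution in E; simpl in E. injection E as Eks Elam.
  rewrite Elam in Eks, Htp1.
  set (lam := rapidity L U phi A2 (target N m2)) in *.
  assert (Hsame : forall r, (r < L)%nat -> In r A1 <-> In r A2).
  { intros r Hr. rewrite <- (in_map_momentum L U phi U_pos L_large lam A1 r Hr HL1),
      <- (in_map_momentum L U phi U_pos L_large lam A2 r Hr HL2),
      <- (in_sort_iff (map _ A1)), <- (in_sort_iff (map _ A2)), Eks.
    reflexivity. }
  assert (EA : A1 = A2).
  { apply (combinations_same_elements N N (seq 0 L)); auto using seq_NoDup.
    intros r. split; intros Hr; [apply Hsame; auto|apply (Hsame r (HL2 r Hr))]; auto. }
  subst A2. f_equal.
  rewrite Htp2 in Htp1. unfold target in Htp1. pose proof PI_RGT_0.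
  apply INR_eq. nra.
Qed.

End Solutions.

Theorem proposition1 (L N : nat) (U phi : R)
  (hL : (2 <= L)%nat) (hN2 : (2 <= N)%nat) (hNL : (N <= L)%nat)
  (hU : U > 8 / INR L) (hphi0 : 0 <= phi) (hphi1 : phi < 2 * PI / INR L) :
  exists sols : list (list R * R),
    NoDup sols /\
    (forall s, LW_real_solution L N U phi s <-> In s sols) /\
    INR (length sols) = Binomial.C L N * INR (N - 1).
Proof.
  assert (HL : 2 <= INR L) by (apply (le_INR 2) in hL; exact hL).
  assert (U_pos : 0 < U) by (pose proof (Rdiv_lt_0_compat 8 (INR L) ltac:(lra) ltac:(lra)); lra).
  assert (L_large : 8 / U < INR L).
  { apply (Rmult_lt_reg_r U); [exact U_pos|].
    replace (8 / U * U) with 8 by (field; lra).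
    apply (Rmult_lt_compat_l (INR L)) in hU; [|lra].
    replace (INR L * (8 / INR L)) with 8 in hU by (field; lra). lra. }
  assert (N_pos : (1 <= N)%nat) by lia.
  exists (map (lw_solution L N U phi) (labels L N)). split; [|split].
  - apply FinFun.Injective_map_NoDup_in; [|apply labels_NoDup].
    intros p1 p2. now apply lw_solution_inj.
  - intros s. rewrite in_map_iff. split.
    + intros Hs. destruct (lw_solution_complete L N U phi U_pos L_large N_pos hNL s Hs)
        as [p [Ep Hp]].
      now exists p.
    + intros [p [<- Hp]]. now apply lw_solution_correct.
  - rewrite length_map. now apply length_labels.
Qed.
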